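(* With the setting in the context, the Hamiltonian $H=-\sum_n\sum_{x\in K_n}A_x^0-\sum_n\sum_{y\in K_n}B_y^0$ satisfies $HA_x^r=A_x^rH$ for all $n$, all $x\in K_n$ and all $r\in\widehat G_{n+1}$, and $HB_y^g=B_y^gH$ for all $m$, all $y\in K_m$ and all $g\in G_{m-1}$.
   Context: $(C_\bullet,\partial^C_\bullet)$ is a chain complex with each $C_n$ free abelian on a finite set $K_n$, $K_n\ne\emptyset$ for finitely many $n$; $(G_\bullet,\partial^G_\bullet)$ is a chain complex of finite abelian groups, $\widehat{G}_k=\mathrm{Hom}(G_k,U(1))$. $\mathrm{hom}(C,G)^p=\prod_n\mathrm{Hom}(C_n,G_{n-p})$ with $(\delta^pf)_n=f_{n-1}\partial^C_n-(-1)^p\partial^G_{n-p}f_n$. $\mathrm{hom}(C,G)_p=\mathrm{Hom}(\mathrm{hom}(C,G)^p,U(1))$ (written additively), $\chi_m(f)=m(f)$, $\delta_1m=m\circ\delta^0$. $\mathcal H=\bigotimes_n\bigotimes_{x\in K_n}\mathbb C[G_n]$ with orthonormal basis $|f\rangle$, $f\in\mathrm{hom}(C,G)^0$; $P_t|f\rangle=|f+t\rangle$, $Q_m|f\rangle=\chi_m(f)|f\rangle$; $A_t=P_{\delta^{-1}t}$ ($t\in\mathrm{hom}(C,G)^{-1}$), $B_m=Q_{\delta_1m}$ ($m\in\mathrm{hom}(C,G)_1$). For $x\in K_n$, $g\in G_{n-p}$, $gx^*\in\mathrm{hom}(C,G)^p$ has $n$-th component sending $x\mapsto g$ and other elements of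 $K_n$ to $0$, other components $0$; for $r\in\widehat G_{n-p}$, $rx_*(f)=r(f_n(x))$. For $x\in K_n$: $A_x^r=\frac1{|G_{n+1}|}\sum_{h\in G_{n+1}}r(h)A_{hx^*}$ ($r\in\widehat G_{n+1}$), $B_x^g=\frac1{|G_{n-1}|}\sum_{\rho\in\widehat G_{n-1}}\rho(g)B_{\rho x_*}$ ($g\in G_{n-1}$); superscript $0$ denotes the trivial character, resp. the zero element. *)

From HB Require Import structures.
From mathcomp Require Import all_boot all_order all_algebra algC.
From mathcomp Require Import classical_sets fsbigop.
Unset Implicit Arguments.
Import Order.TTheory GRing.Theory Num.Theory.
Local Open Scope ring_scope.

Definition transp {I : Type} (F : I -> Type) {i j : I} (e : i = j) (a : F i) : F j :=
  eq_rect i F a j e.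
Arguments transp {I} F {i j} e a.

Definition single {I : eqType} (F : I -> Type) (i : I) (a : F i)
    (d : forall j, F j) : forall j, F j :=
  fun j => match @eqP I i j with ReflectT e => transp F e a | ReflectF _ => d j end.

Definition is_U1char (Z : finZmodType) (r : {ffun Z -> algC}) : Prop :=
  (forall a b : Z, r (a + b) = r a * r b) /\ (forall a : Z, `|r a| = 1).

Definition hatG (Z : finZmodType) : classical_sets.set {ffun Z -> algC} :=
  [set r | is_U1char Z r]%classic.

Definition triv_char (Z : finZmodType) : {ffun Z -> algC} := [ffun _ => 1].

Lemma eq_sub1_add1 (n : int) : n - 1 + 1 = n. Proof. by rewrite subrK. Qed.
Lemma eq_add1_sub1 (n : int) : n + 1 - 1 = n. Proof. by rewrite addrK. Qed.

Section Model.
(* C_n = free abelian group on the finite set K n;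
   boundary dC n : C_n -> C_{n-1} is given by its integer matrix
   dC n x = \sum_(y : K (n-1)) cC n x y * y. *)
Variable K : int -> finType.
Variable cC : forall n : int, K n -> K (n - 1) -> int.
Variable G : int -> finZmodType.
Variable dG : forall k : int, G k -> G (k - 1).

(* hom(C,G)^p for p = -1, 0, 1 : n-th component Hom(C_n, G_{n-p}) = maps K n -> G (n-p) *)
Definition homm1 := forall n : int, {ffun K n -> G (n + 1)}.
Definition hom0  := forall n : int, {ffun K n -> G n}.
Definition hom1  := forall n : int, {ffun K n -> G (n - 1)}.

(* (f o dC_n)(x) for f_{n-1} : K (n-1) -> Z *)
Definition precomp (n : int) (Z : zmodType) (f : K (n - 1) -> Z) (x : K n) : Z :=
  \sum_(y : K (n - 1)) f y *~ cC n x y.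
Arguments precomp n {Z} f x.

(* delta^{-1} : (delta t)_n = t_{n-1} o dC_n - (-1)^{-1} dG_{n+1} o t_n
                            = t_{n-1} o dC_n + dG_{n+1} o t_n *)
Definition delta_m1 (t : homm1) : hom0 := fun n =>
  [ffun x : K n => transp G (eq_sub1_add1 n) (precomp n (fun y => t (n - 1) y) x)
                 + transp G (eq_add1_sub1 n) (dG (n + 1) (t n x))].

Definition delta_0 (f : hom0) : hom1 := fun n =>
  [ffun x : K n => precomp n (fun y => f (n - 1) y) x - dG n (f n x)].

Definition add0 (f g : hom0) : hom0 := fun n => [ffun x => f n x + g n x].
Definition opp0 (f : hom0) : hom0 := fun n => [ffun x => - f n x].

(* States: |psi> = \sum_f psi f |f>, f in hom(C,G)^0 *)
Definition state := hom0 -> algC.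
Definition op := state -> state.

(* P_t |f> = |f + t>,  i.e. (P_t psi)(f) = psi (f - t) *)
Definition P (t : hom0) : op := fun psi f => psi (add0 f (opp0 t)).
Definition Q (m : hom0 -> algC) : op := fun psi f => m f * psi f.

Definition A (t : homm1) : op := P (delta_m1 t).
(* m in hom(C,G)_1 = Hom(hom^1, U(1)); delta_1 m = m o delta^0 *)
Definition B (m : hom1 -> algC) : op := Q (fun f => m (delta_0 f)).

Definition upstar (n : int) (x : K n) (h : G (n + 1)) : homm1 :=
  single (fun j => {ffun K j -> G (j + 1)}) n [ffun y => if y == x then h else 0]
         (fun _ => 0).
Definition lowstar (n : int) (x : K n) (rho : {ffun G (n - 1) -> algC}) : hom1 -> algC :=
  fun f => rho (f n x).

Definition Axr (n : int) (x : K n) (r : {ffun G (n + 1) -> algC}) : op :=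
  fun psi f => (#|G (n + 1)|%:R)^-1 * \sum_(h : G (n + 1)) r h * A (upstar n x h) psi f.

Definition Bxg (n : int) (x : K n) (g : G (n - 1)) : op :=
  fun psi f => (#|G (n - 1)|%:R)^-1 *
    (\sum_(rho \in hatG (G (n - 1))) rho g * B (lowstar n x rho) psi f).

(* H = - sum_n sum_{x in K_n} A_x^0 - sum_n sum_{y in K_n} B_y^0, where n ranges over
   a duplicate-free list s containing all degrees n with K n nonempty *)
Definition Ham (s : seq int) : op := fun psi f =>
  - (\sum_(n <- s) \sum_(x : K n) Axr n x (triv_char (G (n + 1))) psi f)
  - (\sum_(n <- s) \sum_(y : K n) Bxg n y (0 : G (n - 1)) psi f).

End Model.

From HB Require Import structures.
From mathcomp Require Import all_boot all_order all_algebra algC.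
From mathcomp Require Import classical_sets fsbigop boolp.
Import GRing.Theory Num.Theory.
Local Open Scope ring_scope.

(* Each A_t is the translation f |-> f + δt of the basis, and each B_m is diagonal
   in the basis |f>, with an eigenvalue that depends on f only through δ^0 f.
   Translations commute with each other and diagonal operators commute with each
   other.  Since ∂^C ∂^C = 0 and ∂^G ∂^G = 0, also δ^0 δ^{-1} = 0, so the
   eigenvalues of the B's are invariant under the translations by δ^{-1} t and the
   A's commute with the B's.  H is a sum of A's and B's, so it commutes with
   every A_x^r and B_y^g. *)

Section Transport.
Variable G : int -> finZmodType.

Lemma transp_is_zmod_morphism {i j : int} (e : i = j) : zmod_morphism (transp G e).
Proof. by case: j / e. Qed.

HB.instance Definition _ (i j : int) (e : i = j) :=
  GRing.isZmodMorphism.Build (G i) (G j) (transp G e) (transp_is_zmod_morphism e).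

Lemma map_transp (F : forall k : int, G k -> G (k - 1)) {k j : int}
    {e : k = j} (e' : k - 1 = j - 1) (a : G k) :
  F j (transp G e a) = transp G e' (F k a).
Proof. by case: j / e e' => e'; rewrite (eq_irrelevance e' erefl). Qed.

End Transport.

Section Model.
Variable K : int -> finType.
Variable cC : forall n : int, K n -> K (n - 1) -> int.
Variable G : int -> finZmodType.
Variable dG : forall k : int, G k -> G (k - 1).

Local Notation precomp := (precomp K cC).

Lemma eq_precomp {n} {Z : zmodType} {f g : K (n - 1) -> Z} x :
  f =1 g -> precomp n Z f x = precomp n Z g x.
Proof. by move=> /funext ->. Qed.

Lemma precompD n (Z : zmodType) (f g : K (n - 1) -> Z) x :
  precomp n Z (fun y => f y + g y) x = precomp n Z f x + precomp n Z g x.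
Proof. by rewrite /precomp -big_split; apply: eq_bigr => y _; rewrite mulrzDl. Qed.

Lemma precompB n (Z : zmodType) (f g : K (n - 1) -> Z) x :
  precomp n Z (fun y => f y - g y) x = precomp n Z f x - precomp n Z g x.
Proof. by rewrite /precomp -sumrB; apply: eq_bigr => y _; rewrite mulrzBl. Qed.

Lemma raddf_precomp {n} {Z Z' : zmodType} (phi : {additive Z -> Z'})
    (f : K (n - 1) -> Z) x :
  phi (precomp n Z f x) = precomp n Z' (phi \o f) x.
Proof. by rewrite raddf_sum; apply: eq_bigr => y _; rewrite raddfMz. Qed.

Local Notation delta_0 := (delta_0 K cC G dG).
Local Notation delta_m1 := (delta_m1 K cC G dG).
Local Notation sub0 f t := (add0 K G f (opp0 K G t)).
Local Notation Axr := (Axr K cC G dG).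
Local Notation Bxg := (Bxg K cC G dG).

Lemma sub0C f t u : sub0 (sub0 f t) u = sub0 (sub0 f u) t.
Proof.
apply: functional_extensionality_dep => n; apply/ffunP => x.
by rewrite !ffunE addrAC.
Qed.

Definition char_avg {Z : finZmodType} (g a : Z) : algC :=
  (#|Z|%:R)^-1 * \sum_(rho \in hatG Z) rho g * rho a.

Lemma BxgE m y g psi f :
  Bxg m y g psi f = char_avg g (delta_0 f m y) * psi f.
Proof.
rewrite /Bxg /B /Q /lowstar /char_avg -mulrA mulr_fsuml; congr (_ * _).
by apply: eq_fsbigr => rho _; rewrite mulrA.
Qed.

Lemma mulr_sum_nested (R : comPzRingType) (I J : finType) (a b : R) (u : I -> R)
    (v : J -> R) (F : I -> J -> R) :
  a * (\sum_i u i * (b * \sum_j v j * F i j))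
  = a * b * \sum_i \sum_j u i * v j * F i j.
Proof.
rewrite -mulrA; congr (_ * _); rewrite mulr_sumr; apply: eq_bigr => i _.
by rewrite mulrCA; congr (_ * _); rewrite mulr_sumr; apply: eq_bigr => j _; rewrite mulrA.
Qed.

Lemma Axr_comm n x r n' x' r' psi f :
  Axr n x r (Axr n' x' r' psi) f = Axr n' x' r' (Axr n x r psi) f.
Proof.
rewrite /Axr /A /P !mulr_sum_nested [in RHS]exchange_big /=.
congr (_ * _); first exact: mulrC.
by apply: eq_bigr => h _; apply: eq_bigr => h' _; rewrite sub0C [r' h' * _]mulrC.
Qed.

Lemma Bxg_comm m y g m' y' g' psi f :
  Bxg m y g (Bxg m' y' g' psi) f = Bxg m' y' g' (Bxg m y g psi) f.
Proof. by rewrite !BxgE mulrCA. Qed.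

Definition additive_op (X : op K G) : Prop :=
  forall (F F' : state K G) f, X (fun f => F f + F' f) f = X F f + X F' f.

Lemma additive_op0 {X : op K G} : additive_op X -> forall f, X (fun => 0) f = 0.
Proof.
by move=> hX f; apply: (addrI (X (fun => 0) f)); rewrite -hX !addr0.
Qed.

Lemma additive_opN {X : op K G} :
  additive_op X -> forall F f, X (fun f => - F f) f = - X F f.
Proof.
move=> hX F f; apply: (addIr (X F f)); rewrite -hX addNr -(additive_op0 hX f).
by congr (X _ f); apply: funext => f'; rewrite addNr.
Qed.

Lemma additive_op_sum {X : op K G} : additive_op X ->
  forall (I : Type) (r : seq I) (F : I -> state K G) f,
  X (fun f => \sum_(i <- r) F i f) f = \sum_(i <- r) X (F i) f.
Proof.
move=> hX I r F f; elim: r => [|i r IHr].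
  rewrite big_nil -[RHS](additive_op0 hX f).
  by congr (X _ f); apply: funext => f'; rewrite big_nil.
rewrite big_cons -IHr -hX.
by congr (X _ f); apply: funext => f'; rewrite big_cons.
Qed.

Lemma Axr_additive n x r : additive_op (Axr n x r).
Proof.
move=> F F' f; rewrite /Axr /A /P -mulrDr -big_split /=.
by congr (_ * _); apply: eq_bigr => h _; rewrite mulrDr.
Qed.

Lemma Bxg_additive m y g : additive_op (Bxg m y g).
Proof. by move=> F F' f; rewrite !BxgE mulrDr. Qed.

Lemma Ham_comm (s : seq int) (X : op K G) : additive_op X ->
  (forall n x psi f, X (Axr n x (triv_char _) psi) f = Axr n x (triv_char _) (X psi) f) ->
  (forall n y psi f, X (Bxg n y 0 psi) f = Bxg n y 0 (X psi) f) ->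
  forall psi, Ham K cC G dG s (X psi) = X (Ham K cC G dG s psi).
Proof.
move=> hX XA XB psi; apply: funext => f.
rewrite /Ham hX !(additive_opN hX) !(additive_op_sum hX).
congr (- _ - _); apply: eq_bigr => n _; rewrite (additive_op_sum hX).
  by apply: eq_bigr => x _; rewrite XA.
by apply: eq_bigr => y _; rewrite XB.
Qed.

Hypothesis dG_add : forall k : int, {morph dG k : a b / a + b}.
Hypothesis dC_sq : forall (n : int) (x : K n) (z : K (n - 1 - 1)),
  \sum_(y : K (n - 1)) cC n x y * cC (n - 1) y z = 0.
Hypothesis dG_sq : forall (k : int) (a : G k), dG (k - 1) (dG k a) = 0.

Lemma precomp_precomp n (Z : zmodType) (f : K (n - 1 - 1) -> Z) x :
  precomp n Z (precomp (n - 1) Z f) x = 0.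
Proof.
rewrite /precomp; under eq_bigr do rewrite mulrz_suml.
rewrite exchange_big big1 // => z _.
under eq_bigr do rewrite -mulrzA mulrC.
by rewrite -mulrz_sumr dC_sq mulr0z.
Qed.

Lemma dG0 k : dG k 0 = 0.
Proof. by apply: (addrI (dG k 0)); rewrite -dG_add !addr0. Qed.

HB.instance Definition _ (k : int) :=
  GRing.isNmodMorphism.Build (G k) (G (k - 1)) (dG k) (dG0 k, dG_add k).

Lemma delta_0B f u n x : delta_0 (sub0 f u) n x = delta_0 f n x - delta_0 u n x.
Proof.
rewrite !ffunE; under eq_precomp do rewrite !ffunE.
by rewrite precompB raddfB !opprD !opprK addrACA.
Qed.

Lemma delta_0_delta_m1 t n x : delta_0 (delta_m1 t) n x = 0.
Proof.
have dm1E m y : delta_m1 t m y =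
    transp G (eq_sub1_add1 m) (precomp m _ (t (m - 1)) y)
    + transp G (eq_add1_sub1 m) (dG (m + 1) (t m y)) by rewrite ffunE.
rewrite ffunE (eq_precomp _ (dm1E _)) precompD -raddf_precomp precomp_precomp // raddf0 add0r.
rewrite dm1E dG_add (map_transp G dG (congr1 (fun k => k - 1) (eq_add1_sub1 n))).
rewrite dG_sq raddf0 addr0 (map_transp G dG (eq_add1_sub1 (n - 1))).
by rewrite (raddf_precomp (dG _)) (raddf_precomp (transp G _)) subrr.
Qed.

Lemma delta_0_sub_delta_m1 f t n x : delta_0 (sub0 f (delta_m1 t)) n x = delta_0 f n x.
Proof. by rewrite delta_0B delta_0_delta_m1 subr0. Qed.

Lemma Axr_Bxg_comm n x r m y g psi f :
  Axr n x r (Bxg m y g psi) f = Bxg m y g (Axr n x r psi) f.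
Proof.
rewrite /Axr /A /P; under eq_bigr do rewrite BxgE delta_0_sub_delta_m1.
rewrite BxgE [RHS]mulrCA; congr (_ * _); rewrite mulr_sumr; apply: eq_bigr => h _.
by rewrite mulrCA.
Qed.

End Model.

Theorem lemma6
  (K : int -> finType) (cC : forall n : int, K n -> K (n - 1) -> int)
  (G : int -> finZmodType) (dG : forall k : int, G k -> G (k - 1))
  (dG_add : forall (k : int) (a b : G k), dG k (a + b) = dG k a + dG k b)
  (dC_sq : forall (n : int) (x : K n) (z : K (n - 1 - 1)),
      \sum_(y : K (n - 1)) cC n x y * cC (n - 1) y z = 0)
  (dG_sq : forall (k : int) (a : G k), dG (k - 1) (dG k a) = 0)
  (s : seq int) (s_uniq : uniq s)
  (s_supp : forall n : int, n \notin s -> #|K n| = 0%N) :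
  (forall (n : int) (x : K n) (r : {ffun G (n + 1) -> algC}),
      is_U1char (G (n + 1)) r ->
      forall psi : state K G,
        Ham K cC G dG s (Axr K cC G dG n x r psi) = Axr K cC G dG n x r (Ham K cC G dG s psi))
  /\
  (forall (m : int) (y : K m) (g : G (m - 1)) (psi : state K G),
        Ham K cC G dG s (Bxg K cC G dG m y g psi) = Bxg K cC G dG m y g (Ham K cC G dG s psi)).
Proof.
(* A_x^r and B_y^g commute with every term of H separately. *)
have AB := Axr_Bxg_comm K cC G dG dG_add dC_sq dG_sq.
split=> [n x r _ psi | m y g psi]; apply: Ham_comm.
- exact: Axr_additive.
- by move=> *; apply: Axr_comm.
- by move=> *; apply: AB.
- exact: Bxg_additive.
- by move=> *; rewrite AB.
- by move=> *; apply: Bxg_comm.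
Qed.
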